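(* Let $A\neq 1$ and $B\neq 0$ be real constants and let $(x_n)_{n\ge0}$ be the solution of $$x_{n+10}=\frac{x_n}{A+B\,x_nx_{n+2}x_{n+4}x_{n+6}x_{n+8}},\qquad n\ge 0,$$ with initial conditions $x_0,\dots,x_9$. Suppose the initial conditions satisfy $x_ix_{i+2}x_{i+4}x_{i+6}x_{i+8}=\frac{1-A}{B}$ for $i=0,1$, and $x_i\neq x_{i+2}$, $x_i\neq x_{i+5}$ (for those indices $i$ with the terms among $x_0,\dots,x_9$). Then the solution is periodic with period $10$. *)

From Stdlib Require Import Reals.
Open Scope R_scope.

Definition is_solution (A B : R) (x : nat -> R) : Prop :=
  forall n : nat,
    x (n + 10)%nat =
      x n / (A + B * (x n * x (n + 2)%nat * x (n + 4)%nat * x (n + 6)%nat * x (n + 8)%nat)).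

Definition periodic_with (p : nat) (x : nat -> R) : Prop :=
  forall n : nat, x (n + p)%nat = x n.

Definition prime_period (p : nat) (x : nat -> R) : Prop :=
  (0 < p)%nat /\ periodic_with p x /\
  forall q : nat, (0 < q < p)%nat -> ~ periodic_with q x.

From Stdlib Require Import Reals Lra Lia.
Open Scope R_scope.

(* With c = (1 - A)/B we have A + B c = 1, so whenever the product
   x_n x_{n+2} x_{n+4} x_{n+6} x_{n+8} equals c the recurrence gives
   x_{n+10} = x_n.  That identity in turn makes the product at n+2 equal to the
   product at n, so the two initial products propagate to all n and every step
   of the recurrence is x_{n+10} = x_n.  A shorter period q < 10 would force the
   period gcd(q, 10), which divides 2 or 5, contradicting x_0 <> x_2 and
   x_0 <> x_5. *)

Lemma periodic_mul (p k : nat) (x : nat -> R) :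
  periodic_with p x -> periodic_with (k * p) x.
Proof.
  intros hp n; induction k as [|k IH]; simpl.
  - now rewrite Nat.add_0_r.
  - now rewrite (Nat.add_comm p), Nat.add_assoc, hp.
Qed.

Lemma periodic_divide (d p : nat) (x : nat -> R) :
  Nat.divide d p -> periodic_with d x -> periodic_with p x.
Proof. intros [k ->]; apply periodic_mul. Qed.

Lemma periodic_gcd (p q : nat) (x : nat -> R) : (0 < p)%nat ->
  periodic_with p x -> periodic_with q x -> periodic_with (Nat.gcd p q) x.
Proof.
  intros p_gt0 hp hq n.
  destruct (Nat.gcd_bezout_pos p q p_gt0) as [u [v huv]].
  rewrite <- (periodic_mul q v x hq), <- Nat.add_assoc, <- huv.
  exact (periodic_mul p u x hp n).
Qed.

Lemma proper_divisor_10 (d : nat) :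
  Nat.divide d 10 -> (d < 10)%nat -> Nat.divide d 2 \/ Nat.divide d 5.
Proof.
  intros [k hk] d_lt10.
  destruct d as [|[|[|[|[|[|d]]]]]]; try nia.
  - left; exists 2%nat; reflexivity.
  - left; exists 1%nat; reflexivity.
  - right; exists 1%nat; reflexivity.
Qed.

Definition window_prod (x : nat -> R) (n : nat) : R :=
  x n * x (n + 2)%nat * x (n + 4)%nat * x (n + 6)%nat * x (n + 8)%nat.

Lemma window_prod_shift2 (x : nat -> R) (n : nat) :
  x (n + 10)%nat = x n -> window_prod x (n + 2) = window_prod x n.
Proof.
  intros hx; unfold window_prod.
  replace (n + 2 + 2)%nat with (n + 4)%nat by lia.
  replace (n + 2 + 4)%nat with (n + 6)%nat by lia.
  replace (n + 2 + 6)%nat with (n + 8)%nat by lia.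
  replace (n + 2 + 8)%nat with (n + 10)%nat by lia.
  rewrite hx; ring.
Qed.

Section FixedProductSolutions.

Variables (A B c : R) (x : nat -> R).
Hypothesis hsol : is_solution A B x.
Hypothesis hc : A + B * c = 1.

Lemma solution_step_fixed (n : nat) :
  window_prod x n = c -> x (n + 10)%nat = x n.
Proof.
  intros hn; rewrite hsol.
  change (x n / (A + B * window_prod x n) = x n).
  rewrite hn, hc; field.
Qed.

Lemma window_prod_const :
  window_prod x 0 = c -> window_prod x 1 = c -> forall n, window_prod x n = c.
Proof.
  intros h0 h1.
  enough (H : forall n, window_prod x n = c /\ window_prod x (S n) = c)
    by (intro n; apply H).
  induction n as [|n [IH IHS]]; [easy|].
  split; [exact IHS|].
  replace (S (S n)) with (n + 2)%nat by lia.
  now rewrite window_prod_shift2 by (apply solution_step_fixed, IH).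
Qed.

Lemma solution_periodic10 :
  window_prod x 0 = c -> window_prod x 1 = c -> periodic_with 10 x.
Proof.
  intros h0 h1 n; apply solution_step_fixed, window_prod_const; assumption.
Qed.

End FixedProductSolutions.

Theorem theorem2 (A B : R) (x : nat -> R)
  (hA : A <> 1) (hB : B <> 0)
  (hsol : is_solution A B x)
  (hinit : forall i : nat, (i <= 1)%nat ->
     x i * x (i + 2)%nat * x (i + 4)%nat * x (i + 6)%nat * x (i + 8)%nat = (1 - A) / B)
  (hne2 : forall i : nat, (i + 2 <= 9)%nat -> x i <> x (i + 2)%nat)
  (hne5 : forall i : nat, (i + 5 <= 9)%nat -> x i <> x (i + 5)%nat) :
  prime_period 10 x.
Proof.
  assert (hc : A + B * ((1 - A) / B) = 1) by (field; exact hB).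
  assert (hper : periodic_with 10 x).
  { apply (solution_periodic10 A B ((1 - A) / B)); try assumption;
      apply (hinit _); lia. }
  split; [lia|]; split; [exact hper|].
  intros q [q_gt0 q_lt10] hq.
  assert (hdiv : Nat.divide (Nat.gcd 10 q) 2 \/ Nat.divide (Nat.gcd 10 q) 5).
  { apply proper_divisor_10; [apply Nat.gcd_divide_l|].
    pose proof (Nat.divide_pos_le _ _ q_gt0 (Nat.gcd_divide_r 10 q)); lia. }
  pose proof (periodic_gcd 10 q x ltac:(lia) hper hq) as hgcd.
  destruct hdiv as [hd | hd]; pose proof (periodic_divide _ _ x hd hgcd 0%nat).
  - now apply (hne2 0%nat); [lia|].
  - now apply (hne5 0%nat); [lia|].
Qed.
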